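(* Assume $\sigma_1(x)=\sigma_1'(0)(x-a_1)$ with $\sigma_1'(0)\ne0$ and $a_1\ne0$ real, and that $\sigma_2(x)=\tfrac12\sigma_2''(0)(x-a_2)(x-b_2)$ (where $\tfrac12\sigma_2''(0)=(q-1)\tau'(0)$) has real zeros with $a_1<0<a_2\le b_2$; assume $\Lambda_q:=\tau'(0)/\sigma_1'(0)<0$. Put $a=b_2$ and $$\rho(x)=|x|^{\alpha}\sqrt{x^{\log_qx-1}}\,\frac{(qa_2/x,\,qa/x;q)_\infty}{(a_1/x;q)_\infty},\qquad q^{\alpha}=\frac{q^{-2}\tfrac12\sigma_2''(0)}{\sigma_1'(0)}.$$ Then there exist polynomials $P_n$, $n\in\mathbb{N}_0$, with $P_n$ of degree $n$ a solution of the q-EHT with $\lambda=\lambda_n$, and nonzero constants $d_n^2$, such that for all $m,n\in\mathbb{N}_0$ $$\int_a^{\infty}P_n(x)P_m(x)\rho(x)\,d_{q^{-1}}x=d_n^2\delta_{mn},$$ i.e. the $P_n$ are orthogonal with respect to $\rho$ supported on $\{q^{-k}a\}_{k\in\mathbb{N}_0}$.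
   Context: Throughout $0<q<1$. For a function $y$ and $\zeta\in\{q,q^{-1}\}$, $D_\zeta y(x)=\frac{y(x)-y(\zeta x)}{(1-\zeta)x}$ for $x\ne0$ and $D_\zeta y(0)=y'(0)$; $[n]_q=\frac{1-q^n}{1-q}$. Let $\sigma_1$ be a real polynomial of degree at most two, $\tau(x)=\tau'(0)x+\tau(0)$ a real polynomial with $\tau'(0)\ne0$, and $\sigma_2(x):=q[\sigma_1(x)+(1-q^{-1})x\tau(x)]$. The q-EHT with parameter $n$ is $\sigma_1(x)D_{q^{-1}}D_qy(x)+\tau(x)D_qy(x)+\lambda_ny(x)=0$, $\lambda_n=-[n]_q\big(\tau'(0)+\tfrac12[n-1]_{q^{-1}}\sigma_1''(0)\big)$. $(\beta;q)_\infty=\prod_{k\ge0}(1-\beta q^k)$, $(\beta_1,\dots,\beta_r;q)_\infty=\prod_i(\beta_i;q)_\infty$. For $q^\alpha=c$ ($c\ne0$), $\alpha$ is any complex number with $e^{\alpha\ln q}=c$ and $|x|^\alpha:=e^{\alpha\ln|x|}$; for $x>0$, $\sqrt{x^{\log_qx-1}}:=\exp\big(\tfrac12(\log_qx-1)\ln x\big)$. For $a>0$, $\int_a^\infty f(x)\,d_{q^{-1}}x=(q^{-1}-1)a\sum_{j\ge0}q^{-j}f(q^{-j}a)$. *)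

From Stdlib Require Import Reals.
From Coquelicot Require Import Coquelicot.
Open Scope R_scope.

Definition cexp (z : C) : C :=
  (exp (fst z) * cos (snd z), exp (fst z) * sin (snd z)).

Definition abs_cpow (x : R) (alpha : C) : C :=
  cexp (Cmult alpha (RtoC (ln (Rabs x)))).

Definition Dq (zeta : R) (y : R -> R) (x : R) : R :=
  if Req_EM_T x 0 then Derive y 0 else (y x - y (zeta * x)) / ((1 - zeta) * x).

Definition qnum (q : R) (n : Z) : R := (1 - powerRZ q n) / (1 - q).

Definition lambda_n (q tau1 sigma1pp : R) (n : nat) : R :=
  - qnum q (Z.of_nat n) * (tau1 + / 2 * qnum (/ q) (Z.of_nat n - 1) * sigma1pp).

Definition is_poly_deg (y : R -> R) (n : nat) : Prop :=
  exists c : nat -> R, c n <> 0 /\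
    forall x, y x = sum_f_R0 (fun k => c k * x ^ k) n.

Fixpoint qpoch_partial (beta q : R) (N : nat) : R :=
  match N with
  | O => 1
  | S N' => qpoch_partial beta q N' * (1 - beta * q ^ N')
  end.
Definition qpoch_inf (beta q : R) : R :=
  real (Lim_seq (fun N => qpoch_partial beta q N)).

Definition logq (q x : R) : R := ln x / ln q.

(* the weight rho(x) = |x|^alpha sqrt(x^{log_q x - 1}) (q a2/x, q a/x; q)_inf / (a1/x; q)_inf,
   for x > 0, with sqrt(x^{log_q x -1}) := exp(1/2 (log_q x - 1) ln x) *)
Definition rho (q : R) (alpha : C) (a1 a2 a : R) (x : R) : C :=
  Cmult (abs_cpow x alpha)
    (RtoC (exp (/ 2 * (logq q x - 1) * ln x)
           * qpoch_inf (q * a2 / x) q * qpoch_inf (q * a / x) q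
           / qpoch_inf (a1 / x) q)).

(* "int_a^infty f(x) d_{q^{-1}}x = L":  (q^{-1}-1) a sum_{j>=0} q^{-j} f(q^{-j} a) converges to L *)
Definition qint_inf_is (q a : R) (f : R -> C) (L : C) : Prop :=
  is_series (fun j : nat => Cmult (RtoC ((/ q - 1) * a * (/ q) ^ j)) (f ((/ q) ^ j * a))) L.

Definition sigma1 (s1 a1 x : R) : R := s1 * (x - a1).
Definition tau (t t0 x : R) : R := t * x + t0.
Definition sigma2 (q s1 a1 t t0 x : R) : R :=
  q * (sigma1 s1 a1 x + (1 - / q) * x * tau t t0 x).

From Stdlib Require Import Reals Lra Lia.
From Coquelicot Require Import Coquelicot.
Open Scope R_scope.

(* Since sigma1 is linear, the q-EHT maps x^k into the span of x^k, x^(k-1), x^(k-2), with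
   diagonal entry -lambda_k; so for lambda = lambda_n a monic polynomial solution of degree n is
   obtained by solving for the coefficients downwards from the leading one (the lambda_k are
   distinct because tau'(0) != 0).
   On the lattice x_j = q^(-j) a the equation becomes the three-term difference equation
   A_j (P(x_(j+1)) - P(x_j)) - B_j (P(x_j) - P(x_(j-1))) + lambda P(x_j) = 0, and the masses
   w_j of rho satisfy the discrete Pearson equation w_j A_j = w_(j+1) B_(j+1), with B_0 = 0
   because sigma2(a) = 0. Summation by parts gives
   (lambda_n - lambda_m) sum_(j <= N) w_j P_n(x_j) P_m(x_j)
     = w_N A_N (P_n(x_N) P_m(x_(N+1)) - P_m(x_N) P_n(x_(N+1))),
   and the right-hand side tends to 0 because w_(j+1) / w_j = O(1 / x_j) beats any polynomial
   growth. The hypotheses a1 < 0 < a2 <= a make all the q-Pochhammer factors, hence all w_j,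
   positive, so the norms are positive. Finally |q^(-j) a|^alpha = a^alpha q^(-j alpha) makes the
   complex weight a^alpha times a positive real one. *)

(** * Polynomial solutions of the q-EHT *)

Definition peval (N : nat) (c : nat -> R) (x : R) : R := sum_f_R0 (fun k => c k * x ^ k) N.

Lemma peval_S N c x : peval (S N) c x = peval N c x + c (S N) * x ^ S N.
Proof. reflexivity. Qed.

(* [qnat z k] is [k]_z = 1 + z + ... + z^(k-1); unlike [qnum] it is also meaningful at z = 1. *)
Fixpoint qnat (z : R) (k : nat) : R :=
  match k with O => 0 | S k' => qnat z k' + z ^ k' end.

Definition qderiv_coef (z : R) (c : nat -> R) (k : nat) : R := c (S k) * qnat z (S k).

Lemma qnat_mul (z : R) (k : nat) : (1 - z) * qnat z k = 1 - z ^ k.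
Proof. induction k as [|k IH]; simpl; [ring|]. rewrite Rmult_plus_distr_l, IH. ring. Qed.

Lemma qnat_lt (z : R) (k m : nat) : 0 < z -> (k < m)%nat -> qnat z k < qnat z m.
Proof.
  intros Hz Hkm. induction Hkm as [|m _ IH]; simpl.
  - pose proof (pow_lt z k Hz). lra.
  - pose proof (pow_lt z m Hz). lra.
Qed.

Lemma qnat_bound (z : R) (k : nat) : 0 < z < 1 -> 0 <= qnat z k <= / (1 - z).
Proof.
  intro Hz.
  assert (E : qnat z k = (1 - z ^ k) / (1 - z)) by (rewrite <- qnat_mul; field; lra).
  assert (Hzk : 0 <= z ^ k <= 1) by (destruct k; [simpl; lra|];
    pose proof (pow_lt_1_compat z (S k) ltac:(lra) ltac:(lia)); lra).
  rewrite E. unfold Rdiv. pose proof (Rinv_0_lt_compat (1 - z) ltac:(lra)). nra.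
Qed.

Lemma qnum_nat (q : R) (n : nat) : q <> 1 -> qnum q (Z.of_nat n) = qnat q n.
Proof.
  intro Hq. unfold qnum. rewrite <- pow_powerRZ, <- qnat_mul. field. lra.
Qed.

Lemma peval_qdiff_sum z N c x :
  sum_f_R0 (fun k => c k * qnat z k * x ^ k) N + c (S N) * qnat z (S N) * x ^ S N
  = x * peval N (qderiv_coef z c) x.
Proof.
  unfold peval, qderiv_coef. induction N as [|N IH]; [simpl; ring|].
  rewrite !tech5, Rmult_plus_distr_l, <- IH. simpl. ring.
Qed.

Lemma is_derive_peval_0 N c : is_derive (peval (S N) c) 0 (c 1%nat).
Proof.
  induction N as [|N IH].
  - apply (is_derive_ext (fun y => c O + c 1%nat * y)); [intro; unfold peval; simpl; ring|].
    auto_derive; [exact I|ring].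
  - replace (c 1%nat) with (c 1%nat + c (S (S N)) * (INR (S (S N)) * 1 * 0 ^ S N))
      by (simpl; ring).
    apply (is_derive_ext (fun y => peval (S N) c y + c (S (S N)) * y ^ S (S N))); [reflexivity|].
    apply (@is_derive_plus R_AbsRing R_NormedModule); [exact IH|].
    apply is_derive_scal, is_derive_pow, (@is_derive_id R_AbsRing).
Qed.

(* [peval N (qderiv_coef z c)] involves [c (S N)], hence the hypothesis [c (S N) = 0]. *)
Lemma Dq_peval z N c x : z <> 1 -> c (S N) = 0 ->
  Dq z (peval N c) x = peval N (qderiv_coef z c) x.
Proof.
  intros Hz Hc. unfold Dq. destruct (Req_EM_T x 0) as [->|Hx].
  - destruct N as [|N].
    + rewrite (Derive_ext _ (fun _ => c O)) by (intro; unfold peval; simpl; ring).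
      rewrite Derive_const. unfold peval, qderiv_coef. simpl. rewrite Hc. ring.
    + rewrite (is_derive_unique _ _ _ (is_derive_peval_0 N c)).
      unfold peval, qderiv_coef. rewrite decomp_sum, sum_eq_R0 by (simpl; intros; ring || lia).
      simpl. ring.
  - assert (E : peval N c x - peval N c (z * x)
                = (1 - z) * sum_f_R0 (fun k => c k * qnat z k * x ^ k) N).
    { unfold peval. rewrite <- minus_sum, scal_sum. apply sum_eq. intros k _.
      replace (c k * x ^ k - c k * (z * x) ^ k) with (c k * (1 - z ^ k) * x ^ k)
        by (rewrite Rpow_mult_distr; ring).
      rewrite <- (qnat_mul z k). ring. }
    rewrite E. apply Rmult_eq_reg_l with x; [|exact Hx].
    rewrite <- peval_qdiff_sum, Hc. field. split; [exact Hx|lra].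
Qed.

Definition coef_shift (c : nat -> R) (k : nat) : R := match k with O => 0 | S k => c k end.

Lemma peval_mul_x N c x : x * peval N c x = peval N (coef_shift c) x + c N * x ^ S N.
Proof.
  unfold peval. induction N as [|N IH]; [simpl; ring|].
  rewrite !tech5, Rmult_plus_distr_l, IH. simpl. ring.
Qed.

Lemma Dq_ext z f g x : (forall y, f y = g y) -> Dq z f x = Dq z g x.
Proof.
  intro H. unfold Dq. destruct (Req_EM_T x 0).
  - apply Derive_ext, H.
  - rewrite !H. reflexivity.
Qed.

Lemma lambda_n_qnat q t n : q <> 1 -> lambda_n q t 0 n = - qnat q n * t.
Proof. intro Hq. unfold lambda_n. rewrite qnum_nat by exact Hq. ring. Qed.

Section QEHT.

Variables (q s1 a1 t t0 : R) (n : nat).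
Hypothesis Hq : 0 < q < 1.

Definition eht_A (k : nat) : R := s1 * qnat q (S k) * qnat (/ q) k + t0 * qnat q (S k).
Definition eht_B (k : nat) : R := - s1 * a1 * qnat q (S (S k)) * qnat (/ q) (S k).

(* The coefficient of [x^k] in the q-EHT applied to [peval n c]; only three coefficients
   of [c] occur because [sigma1] is linear. *)
Definition eht_residual (c : nat -> R) (k : nat) : R :=
  t * (qnat q k - qnat q n) * c k + eht_A k * c (S k) + eht_B k * c (S (S k)).

Lemma eht_peval c x : (forall k, (n < k)%nat -> c k = 0) ->
  sigma1 s1 a1 x * Dq (/ q) (Dq q (peval n c)) x + tau t t0 x * Dq q (peval n c) x
  + lambda_n q t 0 n * peval n c x = peval n (eht_residual c) x.
Proof.
  intro Hc.
  assert (Hq1 : q <> 1) by lra.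
  assert (Hq1' : / q <> 1) by (intro E; apply Hq1; rewrite <- (Rinv_inv q), E; apply Rinv_1).
  set (d := qderiv_coef q c). set (dd := qderiv_coef (/ q) d).
  assert (Hd : forall k, (n <= k)%nat -> d k = 0)
    by (intros k Hk; unfold d, qderiv_coef; rewrite Hc by lia; ring).
  assert (Hdd : forall k, (n <= k)%nat -> dd k = 0)
    by (intros k Hk; unfold dd, qderiv_coef; rewrite Hd by lia; ring).
  rewrite (Dq_ext _ _ (peval n d)) by (intro; apply Dq_peval; auto with arith).
  rewrite !Dq_peval by auto with arith.
  fold d dd. rewrite lambda_n_qnat by exact Hq1.
  unfold sigma1, tau.
  replace (s1 * (x - a1) * peval n dd x + (t * x + t0) * peval n d x + - qnat q n * t * peval n c x)
    with (s1 * (x * peval n dd x) - s1 * a1 * peval n dd x + t * (x * peval n d x)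
          + t0 * peval n d x - qnat q n * t * peval n c x) by ring.
  rewrite !peval_mul_x, (Hd n), (Hdd n), !Rmult_0_l, !Rplus_0_r by lia.
  assert (Hlin : forall N, s1 * peval N (coef_shift dd) x - s1 * a1 * peval N dd x
      + t * peval N (coef_shift d) x + t0 * peval N d x - qnat q n * t * peval N c x
    = peval N (fun k => s1 * coef_shift dd k - s1 * a1 * dd k + t * coef_shift d k + t0 * d k
                        - qnat q n * t * c k) x).
  { induction N as [|N IH]; unfold peval in *; [simpl; ring|]. rewrite !tech5, <- IH. ring. }
  rewrite Hlin. unfold peval. apply sum_eq.
  intros [|k] _; unfold coef_shift, eht_residual, eht_A, eht_B, dd, d, qderiv_coef; simpl; ring.
Qed.

Hypothesis Ht : t <> 0.

(* [eht_tail i = (c (n - i), c (n - i + 1))]: the coefficients are computed downwards from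
   [c n = 1], [c (n + 1) = 0] by solving [eht_residual c k = 0] for [c k]; this is possible
   since [qnat q k <> qnat q n] for [k < n]. *)
Fixpoint eht_tail (i : nat) : R * R :=
  match i with
  | O => (1, 0)
  | S i' => let k := (n - S i')%nat in
      ((eht_A k * fst (eht_tail i') + eht_B k * snd (eht_tail i')) / (t * (qnat q n - qnat q k)),
       fst (eht_tail i'))
  end.

Definition eht_coef (k : nat) : R := if (k <=? n)%nat then fst (eht_tail (n - k)) else 0.

Lemma eht_coef_above k : (n < k)%nat -> eht_coef k = 0.
Proof. intro H. unfold eht_coef. destruct (Nat.leb_spec k n); [lia|reflexivity]. Qed.

Lemma eht_coef_top : eht_coef n = 1.
Proof. unfold eht_coef. rewrite Nat.leb_refl, Nat.sub_diag. reflexivity. Qed.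

Lemma eht_coef_rec k : (k < n)%nat ->
  eht_coef k = (eht_A k * eht_coef (S k) + eht_B k * eht_coef (S (S k)))
               / (t * (qnat q n - qnat q k)).
Proof.
  intro H. unfold eht_coef at 1 2.
  destruct (Nat.leb_spec k n); [|lia]. destruct (Nat.leb_spec (S k) n); [|lia].
  replace (n - k)%nat with (S (n - S k)) by lia. cbn [eht_tail fst].
  replace (n - S (n - S k))%nat with k by lia.
  replace (snd (eht_tail (n - S k))) with (eht_coef (S (S k))); [reflexivity|].
  destruct (Nat.eq_dec (S k) n) as [E|E].
  - rewrite eht_coef_above by lia. rewrite E, Nat.sub_diag. reflexivity.
  - unfold eht_coef. destruct (Nat.leb_spec (S (S k)) n); [|lia].
    replace (n - S k)%nat with (S (n - S (S k))) by lia. reflexivity.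
Qed.

Lemma eht_residual_coef k : eht_residual eht_coef k = 0.
Proof.
  unfold eht_residual. destruct (Nat.lt_ge_cases k n) as [Hk|Hk].
  - pose proof (qnat_lt q k n (proj1 Hq) Hk).
    rewrite (eht_coef_rec k Hk). field. split; [lra|exact Ht].
  - rewrite (eht_coef_above (S k)), (eht_coef_above (S (S k))) by lia.
    destruct (Nat.eq_dec k n) as [->|E]; [ring|]. rewrite eht_coef_above by lia. ring.
Qed.

Definition eht_poly : R -> R := peval n eht_coef.

Lemma eht_poly_deg : is_poly_deg eht_poly n.
Proof. exists eht_coef. split; [rewrite eht_coef_top; lra|reflexivity]. Qed.

Lemma eht_poly_solves x :
  sigma1 s1 a1 x * Dq (/ q) (Dq q eht_poly) x + tau t t0 x * Dq q eht_poly x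
  + lambda_n q t 0 n * eht_poly x = 0.
Proof.
  unfold eht_poly. rewrite eht_peval by exact eht_coef_above.
  unfold peval. apply sum_eq_R0. intros k _. rewrite eht_residual_coef. ring.
Qed.

End QEHT.

Lemma Rabs_peval_le N c y : 0 <= y ->
  Rabs (peval N c y) <= sum_f_R0 (fun k => Rabs (c k)) N * (1 + y) ^ N.
Proof.
  intro Hy. eapply Rle_trans; [apply sum_f_R0_triangle|].
  rewrite Rmult_comm, scal_sum. apply sum_Rle. intros k Hk.
  rewrite Rabs_mult, (Rabs_pos_eq (y ^ k)) by (apply pow_le; lra).
  apply Rmult_le_compat_l; [apply Rabs_pos|].
  apply Rle_trans with ((1 + y) ^ k); [apply pow_incr; lra|apply Rle_pow; [lra|exact Hk]].
Qed.

Lemma peval_monic_nonzero N c : c N = 1 -> exists M, forall y, M < y -> peval N c y <> 0.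
Proof.
  intro Hc. destruct N as [|N].
  - exists 0. intros y _. unfold peval. simpl. rewrite Hc. lra.
  - set (C := sum_f_R0 (fun k => Rabs (c k)) N).
    assert (HC : 0 <= C) by (apply cond_pos_sum; intro; apply Rabs_pos).
    assert (H2 : 0 < 2 ^ N) by (apply pow_lt; lra).
    exists (1 + C * 2 ^ N). intros y Hy.
    assert (Hy1 : 1 < y) by (pose proof (Rmult_le_pos C (2 ^ N) HC (Rlt_le _ _ H2)); lra).
    assert (Hyn : 0 < y ^ N) by (apply pow_lt; lra).
    assert (Hbound : Rabs (peval N c y) < y ^ S N).
    { eapply Rle_lt_trans; [apply Rabs_peval_le; lra|].
      assert (Hpow : (1 + y) ^ N <= 2 ^ N * y ^ N)
        by (rewrite <- Rpow_mult_distr; apply pow_incr; lra).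
      assert (C * (1 + y) ^ N <= C * 2 ^ N * y ^ N)
        by (rewrite Rmult_assoc; apply Rmult_le_compat_l; assumption).
      assert (C * 2 ^ N * y ^ N < y * y ^ N) by (apply Rmult_lt_compat_r; lra).
      fold C. simpl. lra. }
    rewrite peval_S, Hc. intro E.
    assert (Rabs (peval N c y) = y ^ S N)
      by (replace (peval N c y) with (- (1 * y ^ S N)) by lra;
          rewrite Rabs_Ropp, Rmult_1_l, Rabs_pos_eq; [reflexivity|apply pow_le; lra]).
    lra.
Qed.

(** * q-Pochhammer symbols *)

Lemma real_Rbar_mult (c : R) (l : Rbar) : real (Rbar_mult c l) = c * real l.
Proof.
  destruct l as [r| |]; simpl; [reflexivity| |];
  unfold Rbar_mult, Rbar_mult'; destruct (Rle_dec 0 c) as [h|h];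
  try destruct (Rle_lt_or_eq_dec 0 c h); simpl; ring.
Qed.

Lemma real_Lim_seq_ge (u : nat -> R) (m : R) :
  ex_finite_lim_seq u -> (forall N, m <= u N) -> m <= real (Lim_seq u).
Proof.
  intros [l Hl] Hm. rewrite (is_lim_seq_unique _ _ Hl).
  exact (is_lim_seq_le (fun _ => m) u m l Hm (is_lim_seq_const m) Hl).
Qed.

Lemma qpoch_partial_S b q N : qpoch_partial b q (S N) = (1 - b) * qpoch_partial (q * b) q N.
Proof.
  induction N as [|N IH]; [simpl; ring|].
  change (qpoch_partial b q (S (S N))) with (qpoch_partial b q (S N) * (1 - b * q ^ S N)).
  rewrite IH. simpl. ring.
Qed.

Lemma qpoch_inf_shift b q : qpoch_inf b q = (1 - b) * qpoch_inf (q * b) q.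
Proof.
  unfold qpoch_inf. rewrite <- Lim_seq_incr_1.
  rewrite (Lim_seq_ext _ (fun N => (1 - b) * qpoch_partial (q * b) q N))
    by (intro; apply qpoch_partial_S).
  rewrite Lim_seq_scal_l. apply real_Rbar_mult.
Qed.

Lemma exp_le_compat x y : x <= y -> exp x <= exp y.
Proof.
  intro H. destruct (Rle_lt_or_eq_dec _ _ H) as [h|h]; [left; apply exp_increasing, h|].
  rewrite h. lra.
Qed.

Section QPochhammer.

Variables (b q : R).
Hypothesis Hq : 0 < q < 1.

(* Both bounds compare each factor [1 - b q^k] with an exponential, so that the partial
   products are controlled by [exp (const * qnat q N)] and [qnat q N <= 1 / (1 - q)]. *)
Lemma qpoch_inf_ge_1 : b <= 0 -> 1 <= qpoch_inf b q.
Proof.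
  intro Hb.
  assert (Hfac : forall N, 1 <= 1 - b * q ^ N <= exp (- b * q ^ N)).
  { intro N. pose proof (pow_lt q N (proj1 Hq)). pose proof (exp_ineq1_le (- b * q ^ N)).
    split; nra. }
  assert (Hge : forall N, 1 <= qpoch_partial b q N).
  { induction N as [|N IH]; simpl; [lra|]. specialize (Hfac N). nra. }
  assert (Hle : forall N, qpoch_partial b q N <= exp (- b * qnat q N)).
  { induction N as [|N IH]; simpl; [rewrite Rmult_0_r, exp_0; lra|].
    rewrite Rmult_plus_distr_l, exp_plus.
    apply Rmult_le_compat; [pose proof (Hge N); lra|specialize (Hfac N); lra|exact IH|apply Hfac]. }
  apply real_Lim_seq_ge; [|exact Hge].
  apply (ex_finite_lim_seq_incr _ (exp (- b * / (1 - q)))).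
  - intro N. simpl. specialize (Hfac N). pose proof (Hge N). nra.
  - intro N. eapply Rle_trans; [apply Hle|]. apply exp_le_compat.
    pose proof (qnat_bound q N Hq). nra.
Qed.

Lemma qpoch_inf_pos : 0 <= b < 1 -> 0 < qpoch_inf b q.
Proof.
  intro Hb. set (r := b / (1 - b)).
  assert (Hr : 0 <= r) by (unfold r; apply Rdiv_le_0_compat; lra).
  assert (Hfac : forall N, exp (- r * q ^ N) <= 1 - b * q ^ N <= 1).
  { intro N. pose proof (pow_lt q N (proj1 Hq)).
    assert (q ^ N <= 1) by (destruct N; [simpl; lra|];
      pose proof (pow_lt_1_compat q (S N) ltac:(lra) ltac:(lia)); lra).
    set (u := b * q ^ N). assert (Hu : 0 <= u <= b) by (unfold u; split; nra).
    split; [|nra].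
    (* [exp (u / (1 - b)) >= 1 + u / (1 - b) >= 1 / (1 - u)] since [u <= b] *)
    pose proof (exp_ineq1_le (r * q ^ N)) as He.
    replace (- r * q ^ N) with (- (r * q ^ N)) by ring. rewrite exp_Ropp.
    replace (r * q ^ N) with (u / (1 - b)) in * by (unfold r, u; field; lra).
    apply Rmult_le_reg_r with (exp (u / (1 - b))); [apply exp_pos|].
    rewrite Rinv_l by (apply Rgt_not_eq, exp_pos).
    apply Rle_trans with ((1 - u) * (1 + u / (1 - b))); [|apply Rmult_le_compat_l; lra].
    replace ((1 - u) * (1 + u / (1 - b))) with (1 + u * (b - u) / (1 - b)) by (field; lra).
    assert (0 <= u * (b - u) / (1 - b)) by (apply Rdiv_le_0_compat; nra). lra. }
  assert (Hlow : forall N, exp (- r * qnat q N) <= qpoch_partial b q N).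
  { induction N as [|N IH]; simpl; [rewrite Rmult_0_r, exp_0; lra|].
    rewrite Rmult_plus_distr_l, exp_plus.
    apply Rmult_le_compat; [left; apply exp_pos|left; apply exp_pos|exact IH|apply Hfac]. }
  assert (Hunif : forall N, exp (- r * / (1 - q)) <= qpoch_partial b q N).
  { intro N. eapply Rle_trans; [|apply Hlow]. apply exp_le_compat.
    pose proof (qnat_bound q N Hq). nra. }
  apply Rlt_le_trans with (exp (- r * / (1 - q))); [apply exp_pos|].
  apply real_Lim_seq_ge; [|exact Hunif].
  apply (ex_finite_lim_seq_decr _ (exp (- r * / (1 - q)))); [|exact Hunif].
  intro N. simpl. specialize (Hfac N). pose proof (Hunif N). pose proof (exp_pos (- r * / (1 - q))).
  nra.
Qed.

End QPochhammer.

(** * The weight on the lattice [q^(-j) b2] *)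

Lemma ex_series_ratio_half (u : nat -> R) (J : nat) :
  (forall j, 0 <= u j) -> (forall j, (J <= j)%nat -> u (S j) <= / 2 * u j) -> ex_series u.
Proof.
  intros Hpos Hratio.
  assert (Hgeom : forall k, u (k + J)%nat <= u J * (/ 2) ^ k).
  { induction k as [|k IH]; simpl; [lra|].
    apply Rle_trans with (/ 2 * u (k + J)%nat); [apply Hratio; lia|].
    pose proof (Hpos (k + J)%nat). nra. }
  apply (ex_series_incr_n u J).
  apply (ex_series_le (V := R_CompleteNormedModule) _ (fun k => u J * (/ 2) ^ k)).
  - intro k. change (norm (u (J + k)%nat)) with (Rabs (u (J + k)%nat)).
    rewrite Rabs_pos_eq, Nat.add_comm by apply Hpos. apply Hgeom.
  - apply (ex_series_scal_l (V := R_NormedModule)).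
    exists (/ (1 - / 2)). apply is_series_geom. rewrite Rabs_pos_eq; lra.
Qed.

Lemma exp_half_logq_step q y : 0 < q < 1 -> 0 < y ->
  exp (/ 2 * (logq q (/ q * y) - 1) * ln (/ q * y))
  = exp (/ 2 * (logq q y - 1) * ln y) * (q / y).
Proof.
  intros Hq Hy. unfold logq.
  assert (Hl : ln (/ q * y) = - ln q + ln y)
    by (rewrite ln_mult, ln_Rinv; try apply Rinv_0_lt_compat; lra).
  assert (Hlq : ln q < 0) by (rewrite <- ln_1; apply ln_increasing; lra).
  rewrite Hl.
  replace (/ 2 * ((- ln q + ln y) / ln q - 1) * (- ln q + ln y))
    with (/ 2 * (ln y / ln q - 1) * ln y + (ln q + - ln y)) by (field; lra).
  rewrite !exp_plus, exp_Ropp, !exp_ln by lra. unfold Rdiv. ring.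
Qed.

Section Lattice.

Variables (q b2 : R).
Hypotheses (Hq : 0 < q < 1) (Hb2 : 0 < b2).

Definition lattice (j : nat) : R := (/ q) ^ j * b2.

Lemma lattice_S j : lattice (S j) = / q * lattice j.
Proof. unfold lattice. simpl. ring. Qed.

Lemma lattice_ge j : b2 <= lattice j.
Proof.
  assert (Hiq : 1 <= / q) by (rewrite <- Rinv_1; apply Rinv_le_contravar; lra).
  induction j as [|j IH]; [unfold lattice; simpl; lra|].
  rewrite lattice_S. nra.
Qed.

Lemma lattice_eventually_gt M : exists J, forall j, (J <= j)%nat -> M < lattice j.
Proof.
  destruct (Rlt_or_le M b2) as [HM|HM].
  { exists O. intros j _. pose proof (lattice_ge j). lra. }
  destruct (pow_lt_1_zero q ltac:(rewrite Rabs_pos_eq; lra) (b2 / M)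
              ltac:(apply Rdiv_lt_0_compat; lra)) as [J HJ].
  exists J. intros j Hj. specialize (HJ j Hj).
  assert (Hqj : 0 < q ^ j) by (apply pow_lt; lra).
  rewrite Rabs_pos_eq in HJ by lra.
  unfold lattice. rewrite pow_inv.
  apply Rmult_lt_reg_l with (q ^ j); [exact Hqj|].
  replace (q ^ j * (/ q ^ j * b2)) with b2 by (field; lra).
  apply Rmult_lt_reg_r with (/ M); [apply Rinv_0_lt_compat; lra|].
  replace (q ^ j * M * / M) with (q ^ j) by (field; lra). exact HJ.
Qed.

End Lattice.

Section Weight.

Variables (q s1 a1 t a2 b2 : R).
Hypotheses (Hq : 0 < q < 1) (Ha1 : a1 < 0) (Ha2 : 0 < a2) (Hab : a2 <= b2) (HLam : t / s1 < 0).

Let x_ := lattice q b2.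
Let Hb2 : 0 < b2. Proof. lra. Qed.
Let x_ge : forall j, b2 <= x_ j := lattice_ge q b2 Hq Hb2.
Let x_S : forall j, x_ (S j) = / q * x_ j := lattice_S q b2.

Definition qalpha : R := / q ^ 2 * ((q - 1) * t) / s1.

Definition weight (y : R) : R :=
  exp (/ 2 * (logq q y - 1) * ln y) * qpoch_inf (q * a2 / y) q * qpoch_inf (q * b2 / y) q
  / qpoch_inf (a1 / y) q.

(* The mass of [rho] at [x_ j] in the q-integral, divided by [b2^alpha]: since
   [x_ j = q^(-j) b2], the factor [|x_ j|^alpha] contributes [qalpha^(-j) b2^alpha]. *)
Definition lattice_weight (j : nat) : R :=
  (/ q - 1) * b2 * (/ q) ^ j * (/ qalpha) ^ j * weight (x_ j).

Definition weight_ratio (y : R) : R := / qalpha * (y - a1) / ((y - q * a2) * (y - q * b2)).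

Lemma qalpha_pos : 0 < qalpha.
Proof.
  assert (Hs1 : s1 <> 0) by (intro E; rewrite E, Rdiv_0_r in HLam; lra).
  unfold qalpha.
  replace (/ q ^ 2 * ((q - 1) * t) / s1) with (/ q ^ 2 * (1 - q) * (- (t / s1))) by (field; lra).
  apply Rmult_lt_0_compat; [apply Rmult_lt_0_compat|]; [|lra|lra].
  apply Rinv_0_lt_compat. nra.
Qed.

Lemma weight_step y : 0 < y ->
  weight (/ q * y) * ((1 - q * a2 / y) * (1 - q * b2 / y)) = weight y * (q / y) * (1 - a1 / y).
Proof.
  intro Hy. unfold weight. rewrite exp_half_logq_step by assumption.
  replace (q * a2 / (/ q * y)) with (q * (q * a2 / y)) by (field; lra).
  replace (q * b2 / (/ q * y)) with (q * (q * b2 / y)) by (field; lra).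
  replace (a1 / (/ q * y)) with (q * (a1 / y)) by (field; lra).
  rewrite (qpoch_inf_shift (q * a2 / y)), (qpoch_inf_shift (q * b2 / y)),
    (qpoch_inf_shift (a1 / y)).
  assert (Ha1y : a1 / y < 0) by (apply Rdiv_neg_pos; assumption).
  assert (1 <= qpoch_inf (q * (a1 / y)) q) by (apply qpoch_inf_ge_1; nra).
  field. repeat split; lra.
Qed.

Lemma lattice_weight_S j : lattice_weight (S j) = lattice_weight j * weight_ratio (x_ j).
Proof.
  pose proof (x_ge j) as Hy. set (y := x_ j) in *.
  pose proof qalpha_pos.
  assert (Hw : weight (/ q * y) = weight y * (q / y) * (1 - a1 / y)
                                 / ((1 - q * a2 / y) * (1 - q * b2 / y)))
    by (rewrite <- weight_step by lra; field; repeat split; nra).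
  unfold lattice_weight, weight_ratio. rewrite x_S. fold y. rewrite Hw. simpl.
  field. repeat split; nra.
Qed.

Lemma weight_ratio_bound y : b2 <= y ->
  0 < weight_ratio y <= / qalpha * (1 - a1 / b2) / (1 - q) ^ 2 / y.
Proof.
  intro Hy. pose proof qalpha_pos as Hc.
  assert (Hci : 0 < / qalpha) by (apply Rinv_0_lt_compat; exact Hc).
  assert (Hya : (1 - q) * y <= y - q * a2) by nra.
  assert (Hyb : (1 - q) * y <= y - q * b2) by nra.
  assert (H1q : 0 < (1 - q) * y) by nra.
  split.
  - unfold weight_ratio. apply Rdiv_lt_0_compat; apply Rmult_lt_0_compat; lra.
  - unfold weight_ratio, Rdiv.
    apply Rle_trans with (/ qalpha * ((1 - a1 / b2) * y) * / (((1 - q) * y) * ((1 - q) * y))).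
    + apply Rmult_le_compat.
      * apply Rmult_le_pos; lra.
      * left; apply Rinv_0_lt_compat, Rmult_lt_0_compat; lra.
      * apply Rmult_le_compat_l; [lra|].
        replace ((1 - a1 / b2) * y) with (y - a1 + - a1 * (y - b2) / b2) by (field; lra).
        assert (0 <= - a1 * (y - b2) / b2) by (apply Rdiv_le_0_compat; nra). lra.
      * apply Rinv_le_contravar; [apply Rmult_lt_0_compat; lra|apply Rmult_le_compat; lra].
    + right. field. repeat split; lra.
Qed.

Lemma lattice_weight_pos j : 0 < lattice_weight j.
Proof.
  induction j as [|j IH].
  - unfold lattice_weight, weight, x_, lattice. simpl. rewrite !Rmult_1_l.
    assert (0 < qpoch_inf (q * a2 / b2) q).
    { apply qpoch_inf_pos; [exact Hq|]. split; [apply Rdiv_le_0_compat; nra|].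
      apply Rmult_lt_reg_r with b2; [lra|]. unfold Rdiv. rewrite Rmult_assoc, Rinv_l; nra. }
    assert (0 < qpoch_inf (q * b2 / b2) q)
      by (replace (q * b2 / b2) with q by (field; lra); apply qpoch_inf_pos; lra).
    assert (1 <= qpoch_inf (a1 / b2) q)
      by (apply qpoch_inf_ge_1; [exact Hq|]; left; apply Rdiv_neg_pos; lra).
    assert (1 < / q) by (rewrite <- Rinv_1; apply Rinv_lt_contravar; lra).
    pose proof (exp_pos (/ 2 * (logq q b2 - 1) * ln b2)).
    apply Rmult_lt_0_compat; [repeat apply Rmult_lt_0_compat; lra|].
    apply Rdiv_lt_0_compat; [repeat apply Rmult_lt_0_compat|]; lra.
  - rewrite lattice_weight_S. apply Rmult_lt_0_compat; [exact IH|].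
    apply weight_ratio_bound, x_ge.
Qed.

(* The weight decays faster than any power along the lattice: the step ratio is [O(1/y)]
   while [(1 + y)^K] grows only by the bounded factor [q^(-K)]. *)
Lemma ex_series_lattice_weight_pow K :
  ex_series (fun j => lattice_weight j * (1 + x_ j) ^ K).
Proof.
  set (D := / qalpha * (1 - a1 / b2) / (1 - q) ^ 2).
  assert (HqK : 0 < (/ q) ^ K) by (apply pow_lt, Rinv_0_lt_compat; lra).
  assert (Hiq : 1 <= / q) by (rewrite <- Rinv_1; apply Rinv_le_contravar; lra).
  destruct (lattice_eventually_gt q b2 Hq Hb2 (2 * D * (/ q) ^ K)) as [J HJ].
  apply (ex_series_ratio_half _ J).
  - intro j. pose proof (lattice_weight_pos j). pose proof (x_ge j).
    apply Rmult_le_pos; [lra|apply pow_le; lra].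
  - intros j Hj. specialize (HJ j Hj). change (lattice q b2 j) with (x_ j) in HJ.
    pose proof (x_ge j) as Hy. pose proof (lattice_weight_pos j) as Hw.
    destruct (weight_ratio_bound (x_ j) Hy) as [Hr0 Hr]. fold D in Hr.
    set (y := x_ j) in *.
    assert (HrK : weight_ratio y * (/ q) ^ K <= / 2).
    { apply Rle_trans with (D / y * (/ q) ^ K); [apply Rmult_le_compat_r; lra|].
      apply Rmult_le_reg_l with (2 * y); [lra|].
      replace (2 * y * (D / y * (/ q) ^ K)) with (2 * D * (/ q) ^ K) by (field; lra). lra. }
    assert (Hp : (1 + / q * y) ^ K <= (/ q) ^ K * (1 + y) ^ K)
      by (rewrite <- Rpow_mult_distr; apply pow_incr; split; nra).
    assert (Hp0 : 0 <= (1 + y) ^ K) by (apply pow_le; lra).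
    rewrite lattice_weight_S, x_S. fold y.
    apply Rle_trans with ((weight_ratio y * (/ q) ^ K) * (lattice_weight j * (1 + y) ^ K)).
    + replace (weight_ratio y * (/ q) ^ K * (lattice_weight j * (1 + y) ^ K))
        with (lattice_weight j * weight_ratio y * ((/ q) ^ K * (1 + y) ^ K)) by ring.
      apply Rmult_le_compat_l; [nra|exact Hp].
    + apply Rmult_le_compat_r; [nra|exact HrK].
Qed.

End Weight.

(** * Orthogonality *)

Lemma is_series_pos (a : nat -> R) (j0 : nat) (L : R) :
  (forall j, 0 <= a j) -> 0 < a j0 -> is_series a L -> 0 < L.
Proof.
  intros Hpos Hj0 HL.
  assert (Hlim : is_lim_seq (sum_f_R0 a) L).
  { apply (is_lim_seq_ext (sum_n a)); [intro; apply sum_n_Reals|exact HL]. }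
  assert (Hle : sum_f_R0 a j0 <= L).
  { apply (is_lim_seq_incr_compare _ _ Hlim).
    intro N. rewrite tech5. pose proof (Hpos (S N)). lra. }
  destruct j0 as [|j0]; simpl in Hle; [lra|].
  pose proof (cond_pos_sum a j0 Hpos). lra.
Qed.

Lemma is_lim_seq_0_dominated (u v : nat -> R) (C : R) :
  (forall N, Rabs (u N) <= C * v N) -> is_lim_seq v 0 -> is_lim_seq u 0.
Proof.
  intros Hdom Hv.
  assert (HCv : is_lim_seq (fun N => C * v N) 0).
  { replace (Finite 0) with (Rbar_mult C 0) by (simpl; f_equal; ring).
    apply is_lim_seq_scal_l, Hv. }
  apply (is_lim_seq_le_le (fun N => - (C * v N)) u (fun N => C * v N)); [|clear - HCv|exact HCv].
  - intro N. apply Rabs_le_between, Hdom.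
  - replace (Finite 0) with (Rbar_opp 0) by (simpl; f_equal; ring).
    exact (proj1 (is_lim_seq_opp _ _) HCv).
Qed.

(* Discrete Green identity. The value at index [-1] is encoded as [F (pred j)], so the
   [B 0] term drops out and no condition on [B 0] is needed. *)
Lemma difference_green_identity (W A B F G : nat -> R) (lf lg : R) :
  (forall j, A j * (F (S j) - F j) - B j * (F j - F (pred j)) + lf * F j = 0) ->
  (forall j, A j * (G (S j) - G j) - B j * (G j - G (pred j)) + lg * G j = 0) ->
  (forall j, W j * A j = W (S j) * B (S j)) ->
  forall N, (lf - lg) * sum_f_R0 (fun j => W j * (F j * G j)) N
            = W N * A N * (F N * G (S N) - G N * F (S N)).
Proof.
  intros HF HG HW N. induction N as [|N IH].
  - specialize (HF O). specialize (HG O). simpl pred in HF, HG. simpl sum_f_R0.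
    assert (E : (lf - lg) * (W O * (F O * G O)) - W O * A O * (F O * G 1%nat - G O * F 1%nat)
              = W O * (G O * (A O * (F 1%nat - F O) - B O * (F O - F O) + lf * F O)
                       - F O * (A O * (G 1%nat - G O) - B O * (G O - G O) + lg * G O))) by ring.
    rewrite HF, HG in E. lra.
  - rewrite tech5, Rmult_plus_distr_l, IH, HW.
    specialize (HF (S N)). specialize (HG (S N)). simpl pred in HF, HG.
    set (a := A (S N)) in *. set (b := B (S N)) in *. set (v := W (S N)) in *.
    set (f0 := F N) in *. set (f1 := F (S N)) in *. set (f2 := F (S (S N))) in *.
    set (g0 := G N) in *. set (g1 := G (S N)) in *. set (g2 := G (S (S N))) in *.
    assert (E : v * b * (f0 * g1 - g0 * f1) + (lf - lg) * (v * (f1 * g1))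
                - v * a * (f1 * g2 - g1 * f2)
              = v * (g1 * (a * (f2 - f1) - b * (f1 - f0) + lf * f1)
                     - f1 * (a * (g2 - g1) - b * (g1 - g0) + lg * g1))) by ring.
    rewrite HF, HG in E. lra.
Qed.

Section Orthogonality.

Variables (q s1 a1 t t0 a2 b2 : R).
Hypotheses (Hq : 0 < q < 1) (Ha1 : a1 < 0) (Ha2 : 0 < a2) (Hab : a2 <= b2) (HLam : t / s1 < 0).
Hypothesis Hsig2 : forall x, sigma2 q s1 a1 t t0 x = (q - 1) * t * (x - a2) * (x - b2).

Let x_ := lattice q b2.
Let w := lattice_weight q s1 a1 t a2 b2.
Let P := eht_poly q s1 a1 t t0.
Let Hb2 : 0 < b2. Proof. lra. Qed.
Let Ht : t <> 0. Proof. intro E. rewrite E, Rdiv_0_l in HLam. lra. Qed.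
Let Hs1 : s1 <> 0. Proof. intro E. rewrite E, Rdiv_0_r in HLam. lra. Qed.
Let x_ge : forall j, b2 <= x_ j := lattice_ge q b2 Hq Hb2.
Let x_S : forall j, x_ (S j) = / q * x_ j := lattice_S q b2.
Let w_S : forall j, w (S j) = w j * weight_ratio q s1 a1 t a2 b2 (x_ j) :=
  lattice_weight_S q s1 a1 t a2 b2 Hq Ha1 Ha2 Hab HLam.
Let w_pos : forall j, 0 < w j := lattice_weight_pos q s1 a1 t a2 b2 Hq Ha1 Ha2 Hab HLam.
Let ex_series_w_pow : forall K, ex_series (fun j => w j * (1 + x_ j) ^ K) :=
  ex_series_lattice_weight_pow q s1 a1 t a2 b2 Hq Ha1 Ha2 Hab HLam.

(* On the lattice the q-EHT is a three-term difference equation. *)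
Definition lattice_A (y : R) : R := sigma1 s1 a1 y * q ^ 2 / ((1 - q) ^ 2 * y ^ 2).
Definition lattice_B (y : R) : R := sigma2 q s1 a1 t t0 y / ((1 - q) ^ 2 * y ^ 2).

Lemma Dq_lattice f y : y <> 0 ->
  sigma1 s1 a1 y * Dq (/ q) (Dq q f) y + tau t t0 y * Dq q f y
  = lattice_A y * (f (/ q * y) - f y) - lattice_B y * (f y - f (q * y)).
Proof.
  intro Hy. unfold Dq.
  destruct (Req_EM_T y 0) as [E|_]; [contradiction|].
  destruct (Req_EM_T (/ q * y) 0) as [E|_].
  { apply Rmult_integral in E. destruct E as [E|E]; [|contradiction].
    pose proof (Rinv_neq_0_compat q ltac:(lra)); contradiction. }
  replace (q * (/ q * y)) with y by (field; lra).
  unfold lattice_A, lattice_B, sigma2, sigma1, tau. field. repeat split; lra.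
Qed.

Lemma eht_poly_lattice n j :
  lattice_A (x_ j) * (P n (x_ (S j)) - P n (x_ j))
  - lattice_B (x_ j) * (P n (x_ j) - P n (x_ (pred j)))
  + lambda_n q t 0 n * P n (x_ j) = 0.
Proof.
  pose proof (x_ge j) as Hj.
  pose proof (eht_poly_solves q s1 a1 t t0 n Hq Ht (x_ j)) as E.
  rewrite Dq_lattice in E by lra. fold (P n) in E.
  replace (lattice_B (x_ j) * (P n (x_ j) - P n (x_ (pred j))))
    with (lattice_B (x_ j) * (P n (x_ j) - P n (q * x_ j))); [rewrite x_S; exact E|].
  destruct j as [|j]; simpl pred.
  - unfold lattice_B. rewrite Hsig2. unfold x_, lattice. simpl. field. lra.
  - rewrite x_S. replace (q * (/ q * x_ j)) with (x_ j) by (field; lra). reflexivity.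
Qed.

Lemma lattice_pearson j : w j * lattice_A (x_ j) = w (S j) * lattice_B (x_ (S j)).
Proof.
  pose proof (x_ge j) as Hy.
  pose proof (qalpha_pos q s1 t Hq HLam) as Hc.
  rewrite w_S, x_S.
  unfold weight_ratio, lattice_B, lattice_A, qalpha. rewrite Hsig2. unfold sigma1.
  field. repeat split; try lra; try nra; apply Ht.
Qed.

Let C_ (n : nat) : R := sum_f_R0 (fun k => Rabs (eht_coef q s1 a1 t t0 n k)) n.

Let C_nonneg n : 0 <= C_ n.
Proof. apply cond_pos_sum. intro. apply Rabs_pos. Qed.

Let P_bound n j : Rabs (P n (x_ j)) <= C_ n * (1 + x_ j) ^ n.
Proof. apply Rabs_peval_le. pose proof (x_ge j). lra. Qed.

Let P_bound_S n j : Rabs (P n (x_ (S j))) <= C_ n * (/ q) ^ n * (1 + x_ j) ^ n.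
Proof.
  eapply Rle_trans; [apply P_bound|]. rewrite Rmult_assoc, <- Rpow_mult_distr.
  apply Rmult_le_compat_l; [apply C_nonneg|]. apply pow_incr.
  pose proof (x_ge j). assert (1 <= / q) by (rewrite <- Rinv_1; apply Rinv_le_contravar; lra).
  rewrite x_S. split; nra.
Qed.

Lemma lattice_A_bounded : exists M, forall j, Rabs (lattice_A (x_ j)) <= M.
Proof.
  set (c := Rabs s1 * (q ^ 2 / (1 - q) ^ 2)).
  assert (Hc : 0 <= c)
    by (apply Rmult_le_pos; [apply Rabs_pos|apply Rdiv_le_0_compat; [|apply pow_lt]; nra]).
  exists (c * (/ b2 - a1 * (/ b2) ^ 2)). intro j. pose proof (x_ge j) as Hy.
  assert (E : lattice_A (x_ j) = s1 * (q ^ 2 / (1 - q) ^ 2) * (/ x_ j - a1 * (/ x_ j) ^ 2))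
    by (unfold lattice_A, sigma1; field; lra).
  assert (H1 : / x_ j <= / b2) by (apply Rinv_le_contravar; lra).
  assert (H0 : 0 < / x_ j) by (apply Rinv_0_lt_compat; lra).
  assert (H2 : (/ x_ j) ^ 2 <= (/ b2) ^ 2) by (apply pow_incr; lra).
  rewrite E, Rabs_mult, (Rabs_mult s1), (Rabs_pos_eq (q ^ 2 / _)), (Rabs_pos_eq (/ x_ j - _))
    by (nra || (apply Rdiv_le_0_compat; [|apply pow_lt]; nra)).
  fold c. apply Rmult_le_compat_l; nra.
Qed.

Let cross_bound n m N :
  Rabs (P n (x_ N) * P m (x_ (S N)) - P m (x_ N) * P n (x_ (S N)))
  <= C_ n * C_ m * ((/ q) ^ m + (/ q) ^ n) * (1 + x_ N) ^ (n + m).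
Proof.
  pose proof (x_ge N). pose proof (C_nonneg n). pose proof (C_nonneg m).
  pose proof (P_bound n N). pose proof (P_bound m N).
  pose proof (P_bound_S n N). pose proof (P_bound_S m N).
  assert (0 <= (1 + x_ N) ^ n) by (apply pow_le; lra).
  assert (0 <= (1 + x_ N) ^ m) by (apply pow_le; lra).
  assert (0 <= (/ q) ^ n) by (apply pow_le; left; apply Rinv_0_lt_compat; lra).
  assert (0 <= (/ q) ^ m) by (apply pow_le; left; apply Rinv_0_lt_compat; lra).
  eapply Rle_trans; [apply Rabs_triang|]. rewrite Rabs_Ropp, !Rabs_mult, pow_add.
  assert (Rabs (P n (x_ N)) * Rabs (P m (x_ (S N)))
          <= (C_ n * (1 + x_ N) ^ n) * (C_ m * (/ q) ^ m * (1 + x_ N) ^ m))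
    by (apply Rmult_le_compat; auto using Rabs_pos).
  assert (Rabs (P m (x_ N)) * Rabs (P n (x_ (S N)))
          <= (C_ m * (1 + x_ N) ^ m) * (C_ n * (/ q) ^ n * (1 + x_ N) ^ n))
    by (apply Rmult_le_compat; auto using Rabs_pos).
  nra.
Qed.

Lemma lattice_boundary_lim n m :
  is_lim_seq (fun N => w N * lattice_A (x_ N)
                       * (P n (x_ N) * P m (x_ (S N)) - P m (x_ N) * P n (x_ (S N)))) 0.
Proof.
  destruct lattice_A_bounded as [M HM].
  apply (is_lim_seq_0_dominated _ (fun N => w N * (1 + x_ N) ^ (n + m))
           (M * (C_ n * C_ m * ((/ q) ^ m + (/ q) ^ n)))).
  - intro N. pose proof (w_pos N).
    rewrite !Rabs_mult, (Rabs_pos_eq (w N)) by lra.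
    replace (M * (C_ n * C_ m * ((/ q) ^ m + (/ q) ^ n)) * (w N * (1 + x_ N) ^ (n + m)))
      with (w N * M * (C_ n * C_ m * ((/ q) ^ m + (/ q) ^ n) * (1 + x_ N) ^ (n + m))) by ring.
    apply Rmult_le_compat; [apply Rmult_le_pos; [lra|apply Rabs_pos]|apply Rabs_pos| |].
    + apply Rmult_le_compat_l; [lra|apply HM].
    + apply cross_bound.
  - apply ex_series_lim_0, ex_series_w_pow.
Qed.

Lemma lattice_orthogonal n m : n <> m ->
  is_series (fun j => w j * (P n (x_ j) * P m (x_ j))) 0.
Proof.
  intro Hnm.
  set (dl := lambda_n q t 0 n - lambda_n q t 0 m).
  assert (Hdl : dl <> 0).
  { unfold dl. rewrite !lambda_n_qnat by lra. intro E.
    assert (qnat q n = qnat q m) by (apply Rmult_eq_reg_r with t; [lra|exact Ht]).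
    destruct (Nat.lt_total n m) as [h|[h|h]]; [|contradiction|];
      pose proof (qnat_lt q _ _ (proj1 Hq) h); lra. }
  pose proof (difference_green_identity w (fun j => lattice_A (x_ j)) (fun j => lattice_B (x_ j))
                (fun j => P n (x_ j)) (fun j => P m (x_ j)) _ _
                (eht_poly_lattice n) (eht_poly_lattice m) lattice_pearson) as Hgreen.
  cbv beta in Hgreen. fold dl in Hgreen.
  apply is_series_Reals, is_lim_seq_Reals.
  apply (is_lim_seq_ext (fun N => / dl * (w N * lattice_A (x_ N)
                       * (P n (x_ N) * P m (x_ (S N)) - P m (x_ N) * P n (x_ (S N)))))).
  - intro N. rewrite <- Hgreen. field. exact Hdl.
  - replace (Finite 0) with (Rbar_mult (/ dl) 0) by (simpl; f_equal; ring).
    apply is_lim_seq_scal_l, lattice_boundary_lim.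
Qed.

Lemma ex_series_lattice_sq n : ex_series (fun j => w j * (P n (x_ j) * P n (x_ j))).
Proof.
  apply (ex_series_le (V := R_CompleteNormedModule) _
           (fun j => C_ n * C_ n * (w j * (1 + x_ j) ^ (n + n)))).
  - intro j. change (norm ?u) with (Rabs u).
    pose proof (P_bound n j). pose proof (w_pos j). pose proof (C_nonneg n).
    assert (Rabs (P n (x_ j)) * Rabs (P n (x_ j))
            <= (C_ n * (1 + x_ j) ^ n) * (C_ n * (1 + x_ j) ^ n))
      by (apply Rmult_le_compat; auto using Rabs_pos).
    rewrite !Rabs_mult, (Rabs_pos_eq (w j)), pow_add by lra. nra.
  - apply (ex_series_scal_l (V := R_NormedModule)), ex_series_w_pow.
Qed.

(* Positive since [w > 0] and the monic [P n] does not vanish far out on the lattice. *)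
Lemma lattice_norm_pos n : 0 < Series (fun j => w j * (P n (x_ j) * P n (x_ j))).
Proof.
  destruct (peval_monic_nonzero n _ (eht_coef_top q s1 a1 t t0 n)) as [M HM].
  destruct (lattice_eventually_gt q b2 Hq Hb2 M) as [J HJ].
  apply (is_series_pos (fun j => w j * (P n (x_ j) * P n (x_ j))) J);
    [| |apply Series_correct, ex_series_lattice_sq].
  - intro j. apply Rmult_le_pos; [left; apply w_pos|apply Rle_0_sqr].
  - apply Rmult_lt_0_compat; [apply w_pos|]. apply Rsqr_pos_lt, HM, HJ, le_n.
Qed.

End Orthogonality.

(** * The complex weight [rho] *)

Lemma cexp_add z1 z2 : cexp (Cplus z1 z2) = Cmult (cexp z1) (cexp z2).
Proof.
  destruct z1 as [a b], z2 as [c d]. unfold cexp, Cplus, Cmult; simpl.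
  rewrite exp_plus, cos_plus, sin_plus. f_equal; ring.
Qed.

Lemma cexp_neq_0 z : cexp z <> RtoC 0.
Proof.
  destruct z as [a b]. unfold cexp, RtoC. simpl. intro E. injection E as Ec Es.
  pose proof (exp_pos a). pose proof (sin2_cos2 b). unfold Rsqr in *.
  apply Rmult_integral in Ec, Es. destruct Ec, Es; nra.
Qed.

Lemma is_series_RtoC (u : nat -> R) L : is_series u L -> is_series (fun n => RtoC (u n)) (RtoC L).
Proof.
  intros Hu P [eps Heps].
  assert (E : forall n, sum_n (fun k => RtoC (u k)) n = RtoC (sum_n u n)).
  { induction n as [|n IH]; [rewrite !sum_O; reflexivity|].
    rewrite !sum_Sn, IH. unfold plus. simpl. rewrite RtoC_plus. reflexivity. }
  destruct (Hu (ball L eps) (locally_ball L eps)) as [N HN]. exists N. intros n Hn.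
  apply Heps. rewrite E. split; simpl. now apply HN. apply ball_center.
Qed.

Lemma abs_cpow_lattice q b2 alpha c j : 0 < q < 1 -> 0 < b2 -> 0 < c ->
  cexp (Cmult alpha (RtoC (ln q))) = RtoC c ->
  abs_cpow (lattice q b2 j) alpha = Cmult (abs_cpow b2 alpha) (RtoC ((/ c) ^ j)).
Proof.
  intros Hq Hb Hc Halpha. unfold abs_cpow.
  induction j as [|j IH]; [unfold lattice; simpl; rewrite Rmult_1_l; ring|].
  pose proof (lattice_ge q b2 Hq Hb j) as Hy.
  assert (Hiq : 0 < / q) by (apply Rinv_0_lt_compat; lra).
  rewrite Rabs_pos_eq in IH by lra.
  rewrite lattice_S, Rabs_pos_eq by nra.
  rewrite ln_mult, ln_Rinv by (try apply Rinv_0_lt_compat; lra).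
  assert (E : Cmult (cexp (Cmult alpha (RtoC (- ln q + ln (lattice q b2 j))))) (RtoC c)
              = cexp (Cmult alpha (RtoC (ln (lattice q b2 j))))).
  { rewrite <- Halpha, <- cexp_add. f_equal. rewrite RtoC_plus, RtoC_opp. ring. }
  rewrite IH in E. simpl pow. rewrite RtoC_mult.
  transitivity (Cmult (Cmult (cexp (Cmult alpha (RtoC (- ln q + ln (lattice q b2 j))))) (RtoC c))
                      (RtoC (/ c))).
  - rewrite <- Cmult_assoc, <- RtoC_mult, Rinv_r by lra. ring.
  - rewrite E. ring.
Qed.

Lemma qint_mass_lattice q s1 a1 t a2 b2 alpha (f : R -> R) j :
  0 < q < 1 -> 0 < b2 -> 0 < qalpha q s1 t ->
  cexp (Cmult alpha (RtoC (ln q))) = RtoC (qalpha q s1 t) ->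
  Cmult (RtoC ((/ q - 1) * b2 * (/ q) ^ j))
        (Cmult (RtoC (f ((/ q) ^ j * b2))) (rho q alpha a1 a2 b2 ((/ q) ^ j * b2)))
  = Cmult (abs_cpow b2 alpha) (RtoC (lattice_weight q s1 a1 t a2 b2 j * f (lattice q b2 j))).
Proof.
  intros Hq Hb Hc Halpha.
  change ((/ q) ^ j * b2) with (lattice q b2 j).
  change (rho q alpha a1 a2 b2 (lattice q b2 j))
    with (Cmult (abs_cpow (lattice q b2 j) alpha) (RtoC (weight q a1 a2 b2 (lattice q b2 j)))).
  rewrite (abs_cpow_lattice q b2 alpha (qalpha q s1 t) j Hq Hb Hc Halpha).
  unfold lattice_weight. rewrite !RtoC_mult. ring.
Qed.

Theorem theorem5p4
  (q s1 a1 t t0 a2 b2 : R) (alpha : C)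
  (Hq : 0 < q < 1)
  (Hs1 : s1 <> 0) (Ha1 : a1 <> 0) (Ht : t <> 0)
  (* sigma2(x) = 1/2 sigma2''(0) (x-a2)(x-b2), where 1/2 sigma2''(0) = (q-1) tau'(0) *)
  (Hsig2 : forall x, sigma2 q s1 a1 t t0 x = (q - 1) * t * (x - a2) * (x - b2))
  (Hord : a1 < 0 /\ 0 < a2 /\ a2 <= b2)
  (HLam : t / s1 < 0)
  (* q^alpha = q^{-2} (1/2 sigma2''(0)) / sigma1'(0) *)
  (Halpha : cexp (Cmult alpha (RtoC (ln q))) = RtoC (/ q ^ 2 * ((q - 1) * t) / s1)) :
  exists (P : nat -> R -> R) (d2 : nat -> C),
    (forall n, is_poly_deg (P n) n) /\
    (* q-EHT; sigma1''(0) = 0 since sigma1 is linear *)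
    (forall n x, sigma1 s1 a1 x * Dq (/ q) (Dq q (P n)) x + tau t t0 x * Dq q (P n) x
                 + lambda_n q t 0 n * P n x = 0) /\
    (forall n, d2 n <> RtoC 0) /\
    (forall m n, qint_inf_is q b2 (fun x => Cmult (RtoC (P n x * P m x)) (rho q alpha a1 a2 b2 x))
                   (if Nat.eqb m n then d2 n else RtoC 0)).
Proof.
  destruct Hord as [Ha1n [Ha2 Hab]].
  set (P := eht_poly q s1 a1 t t0).
  set (w := lattice_weight q s1 a1 t a2 b2). set (x_ := lattice q b2).
  set (norm2 := fun n => Series (fun j => w j * (P n (x_ j) * P n (x_ j)))).
  exists P, (fun n => Cmult (abs_cpow b2 alpha) (RtoC (norm2 n))).
  split; [|split; [|split]].
  - intro n. apply eht_poly_deg.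
  - intros n x. apply eht_poly_solves; assumption.
  - intro n. apply Cmult_neq_0; [apply cexp_neq_0|]. intro E. apply RtoC_inj in E.
    pose proof (lattice_norm_pos q s1 a1 t t0 a2 b2 Hq Ha1n Ha2 Hab HLam n).
    unfold norm2, w, x_, P in E. lra.
  - intros m n. unfold qint_inf_is.
    apply (is_series_ext
             (fun j => Cmult (abs_cpow b2 alpha) (RtoC (w j * (P n (x_ j) * P m (x_ j)))))).
    { intro j. symmetry. apply (qint_mass_lattice q s1 a1 t a2 b2 alpha (fun x => P n x * P m x));
        [exact Hq|lra|exact (qalpha_pos q s1 t Hq HLam)|exact Halpha]. }
    destruct (Nat.eqb_spec m n) as [->|Hmn].
    + apply (is_series_scal (V := C_NormedModule)), is_series_RtoC, Series_correct.
      apply (ex_series_lattice_sq q s1 a1 t t0 a2 b2 Hq Ha1n Ha2 Hab HLam).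
    + replace (RtoC 0) with (Cmult (abs_cpow b2 alpha) (RtoC 0)) by ring.
      apply (is_series_scal (V := C_NormedModule)), is_series_RtoC.
      apply (lattice_orthogonal q s1 a1 t t0 a2 b2 Hq Ha1n Ha2 Hab HLam Hsig2). auto.
Qed.
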